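(* Let $X=\{x,y,z\}$ and $U=\{u,v,w\}$ be distinct three-element subsets of $\Sigma^+$ such that $X^*$ and $U^*$ are $3$-maximal, $Z=X\cup U$, and let $g,h:A^*\to\Sigma^*$ (with $A=\{\mathbf a,\mathbf b,\mathbf c\}$) be the morphisms $g(\mathbf a)=x,g(\mathbf b)=y,g(\mathbf c)=z$, $h(\mathbf a)=u,h(\mathbf b)=v,h(\mathbf c)=w$. Assume $g$ is $Z$-marked. Let $o$ be a nonempty word with $g(\mathbf u)=h(\mathbf v)o$ for some $\mathbf u,\mathbf v\in A^*$, and let $\mathbf u_1,\mathbf u_2,\mathbf v_1,\mathbf v_2\in A^+$ satisfy $g(\mathbf u\mathbf u_1)=h(\mathbf v\mathbf v_1)$, $g(\mathbf u\mathbf u_2)=h(\mathbf v\mathbf v_2)$, $\mathrm{first}(\mathbf u_1)\neq\mathrm{first}(\mathbf u_2)$, and $\mathbf b=\mathrm{first}(\mathbf v_1)\neq\mathrm{first}(\mathbf v_2)=\mathbf b'$ (so $o$ is a nonempty critical overflow on $(\mathbf u,\mathbf v)$). Then $o=h(\mathbf b)\wedge_Z h(\mathbf b')$.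
   Context: $\Sigma^*$ is the free monoid over a countable alphabet $\Sigma$. A submonoid of rank (cardinality of minimal generating set) at most $k$ is $k$-maximal if it is not properly contained in any submonoid of $\Sigma^*$ of rank at most $k$. The free hull of $Z$ is the smallest free submonoid of $\Sigma^*$ containing $Z$, with basis $\mathrm{FB}(Z)$; each $w$ in it factors uniquely as $b_1\cdots b_n$ with $b_i\in\mathrm{FB}(Z)$, $\mathrm{first}_Z(w)=b_1$, and the words $b_1\cdots b_j$ ($1\le j\le n$) are the $Z$-prefixes of $w$. For $p,q$ in the free hull, $p\wedge_Z q$ is their longest common $Z$-prefix (a prefix of both which is a product of elements of $\mathrm{FB}(Z)$ consistent with both factorizations, empty if none). A morphism $f:A^*\to\Sigma^*$ with images in the free hull is $Z$-marked if $\mathrm{first}_Z(f(\mathbf a_1))\neq\mathrm{first}_Z(f(\mathbf a_2))$ for distinct letters. $\mathrm{first}(\mathbf t)$ is the first letter of $\mathbf t\in A^+$. *)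

From mathcomp Require Import all_boot.
Set Implicit Arguments. Unset Strict Implicit. Unset Printing Implicit Defensive.

Section Words.
Variable S : countType.
Notation word := (seq S).

Definition submonoid (M : word -> Prop) : Prop :=
  M [::] /\ forall p q, M p -> M q -> M (p ++ q).

Definition gen (X : seq word) (w : word) : Prop :=
  exists ws : seq word, {in ws, forall t, t \in X} /\ flatten ws = w.

Definition rank_le (M : word -> Prop) (k : nat) : Prop :=
  exists X : seq word, size X <= k /\ forall w, M w <-> gen X w.

Definition kmaximal (k : nat) (M : word -> Prop) : Prop :=
  submonoid M /\ rank_le M k /\
  forall N : word -> Prop, submonoid N -> rank_le N k ->
    (forall w, M w -> N w) -> forall w, N w -> M w.

(* irreducible elements (= minimal generating set) of a submonoid M *)
Definition base (M : word -> Prop) (w : word) : Prop :=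
  w != [::] /\ M w /\
  ~ (exists p q, p != [::] /\ q != [::] /\ M p /\ M q /\ w = p ++ q).

Definition free_submonoid (M : word -> Prop) : Prop :=
  submonoid M /\
  forall bs1 bs2 : seq word, {in bs1, forall b, base M b} ->
    {in bs2, forall b, base M b} -> flatten bs1 = flatten bs2 -> bs1 = bs2.

Definition free_hull (Z : word -> Prop) (w : word) : Prop :=
  forall M, free_submonoid M -> (forall t, Z t -> M t) -> M w.

Definition FB (Z : word -> Prop) (b : word) : Prop := base (free_hull Z) b.

Definition firstZ (Z : word -> Prop) (w b : word) : Prop :=
  exists bs, {in bs, forall t, FB Z t} /\ flatten bs = w /\
    exists rest, bs = b :: rest.

Definition Zprefix (Z : word -> Prop) (w r : word) : Prop :=
  exists bs, {in bs, forall t, FB Z t} /\ flatten bs = w /\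
    exists j, 1 <= j <= size bs /\ r = flatten (take j bs).

(* r = p /\_Z q : longest common Z-prefix, empty if there is none *)
Definition Zwedge (Z : word -> Prop) (p q r : word) : Prop :=
  (Zprefix Z p r /\ Zprefix Z q r /\
     forall r', Zprefix Z p r' -> Zprefix Z q r' -> size r' <= size r)
  \/ (r = [::] /\ ~ (exists r', Zprefix Z p r' /\ Zprefix Z q r')).

Definition morph (n : nat) (f : 'I_n -> word) (u : seq 'I_n) : word :=
  flatten (map f u).

Definition Zmarked (Z : word -> Prop) (n : nat) (f : 'I_n -> word) : Prop :=
  (forall i, free_hull Z (f i)) /\
  forall i j, i != j -> forall bi bj, firstZ Z (f i) bi -> firstZ Z (f j) bj -> bi <> bj.

(* the three letter images: a |-> x, b |-> y, c |-> z, with A = 'I_3 *)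
Definition mk3 (x y z : word) (i : 'I_3) : word :=
  match val i with 0 => x | 1 => y | _ => z end.

End Words.

From mathcomp Require Import all_boot.
From mathcomp Require Import zify.
From Stdlib Require Import Classical.
Set Implicit Arguments. Unset Strict Implicit. Unset Printing Implicit Defensive.

(* Every submonoid element factors into irreducibles; a
      submonoid is free iff it is stable (a, bc, ab, c in M imply b in M).  The
      free hull of Z is an intersection of stable submonoids, hence stable, hence
      free: factorizations over FB(Z) are unique.
   2. Wedge criterion (Zwedge_of_overflow).  If o != [::] lies in the hull,
      B_i = o Y_i, and the continuations Y_i r_i (r_i in the hull) have
      different first_Z, then o = B_1 /\_Z B_2: a longer common Z-prefix would
      force the factorizations of Y_1 and Y_2 to start with the same basis
      element, which would then be first_Z of both continuations.
   3. Incomparability.  In a 3-maximal U^*, a proper extension P = Q s inside U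
      forces every letter to be a generator other than P
      (kmaximal_proper_prefix).  The marking of g makes the first letters of x,
      y, z distinct, so U would contain four distinct words: impossible.  Hence
      h(b), h(b') are prefix-incomparable, so o is a prefix of both, and the
      continuations start with first_Z(g a_1) <> first_Z(g a_2). *)

Lemma cat_cancel_l (T : Type) (s t1 t2 : seq T) : s ++ t1 = s ++ t2 -> t1 = t2.
Proof. by elim: s => [|a s IH] //= [] /IH. Qed.

Lemma cat_prefix_cases (T : Type) (s1 t1 s2 t2 : seq T) : s1 ++ t1 = s2 ++ t2 ->
  (exists r, s2 = s1 ++ r) \/ (exists r, s1 = s2 ++ r).
Proof.
elim: s1 s2 => [|a s1 IH] [|b s2] /=.
- by left; exists [::].
- by left; exists (b :: s2).
- by right; exists (a :: s1).
- by case=> -> /IH [[r ->]|[r ->]]; [left|right]; exists r.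
Qed.

Lemma common_prefix_of_incomparable (T : Type) (B1 B2 o r1 r2 m1 m2 : seq T) :
  (forall s, B1 <> B2 ++ s) -> (forall s, B2 <> B1 ++ s) ->
  B1 ++ r1 = o ++ m1 -> B2 ++ r2 = o ++ m2 ->
  exists Y1 Y2, B1 = o ++ Y1 /\ B2 = o ++ Y2.
Proof.
move=> n12 n21 /cat_prefix_cases[[X1 eX1]|[Y1 eY1]]
               /cat_prefix_cases[[X2 eX2]|[Y2 eY2]].
- have /cat_prefix_cases[[r er]|[r er]] : B1 ++ X1 = B2 ++ X2 by rewrite -eX1.
  + by case: (n21 r).
  + by case: (n12 r).
- by case: (n21 (X1 ++ Y2)); rewrite eY2 eX1 catA.
- by case: (n12 (X2 ++ Y1)); rewrite eY1 eX2 catA.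
- by exists Y1, Y2.
Qed.

Lemma size_flatten_take (T : Type) (A : seq (seq T)) j :
  size (flatten (take j A)) <= size (flatten A).
Proof. by rewrite -{2}(cat_take_drop j A) flatten_cat size_cat leq_addr. Qed.

Lemma size_in_flatten (T : eqType) (ws : seq (seq T)) t :
  t \in ws -> size t <= size (flatten ws).
Proof.
elim: ws => [|a ws IH] //=; rewrite inE size_cat => /orP[/eqP ->|/IH h].
  exact: leq_addr.
exact: leq_trans h (leq_addl _ _).
Qed.

Lemma take_cons (T : Type) (F : seq T) k e R :
  take k F = e :: R -> exists F', F = e :: F'.
Proof. by case: F => [|t F']; case: k => [|k] //= [-> _]; exists F'. Qed.

Section Factorization.
Variable S : countType.
Implicit Types (M : seq S -> Prop) (w : seq S) (bs : seq (seq S)).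

Definition factorization M w bs := {in bs, forall b, base M b} /\ flatten bs = w.

Lemma factorization_cat M w1 w2 bs1 bs2 :
  factorization M w1 bs1 -> factorization M w2 bs2 ->
  factorization M (w1 ++ w2) (bs1 ++ bs2).
Proof.
move=> [h1 f1] [h2 f2]; split; last by rewrite flatten_cat f1 f2.
by move=> t; rewrite mem_cat => /orP[/h1|/h2].
Qed.

Lemma submonoid_flatten M bs :
  submonoid M -> {in bs, forall b, M b} -> M (flatten bs).
Proof.
move=> [M0 Mcat]; elim: bs => [|b bs IH] //= hbs.
apply: Mcat; first by apply: hbs; rewrite mem_head.
by apply: IH => t ht; apply: hbs; rewrite inE ht orbT.
Qed.

Lemma factorization_exists M w :
  submonoid M -> M w -> exists bs, factorization M w bs.
Proof.
move=> hM; elim: {w}(size w).+1 {-2}w (ltnSn (size w)) => // n IH w hw Mw.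
have [-> | wn] := eqVneq w [::]; first by exists [::].
case: (classic (exists p q, p != [::] /\ q != [::] /\ M p /\ M q /\ w = p ++ q)).
- move=> [p [q [pn [qn [Mp [Mq ew]]]]]].
  have [sp sq] : size p < n /\ size q < n.
    by move: hw pn qn; rewrite ew; case: p {Mp ew} => // a p; case: q {Mq} => // b q;
      rewrite size_cat /= => *; lia.
  have [[bp fp] [bq fq]] := (IH p sp Mp, IH q sq Mq).
  by exists (bp ++ bq); rewrite ew; apply: factorization_cat.
- move=> irr; exists [:: w]; split; last by rewrite /= cats0.
  by move=> b; rewrite inE => /eqP ->.
Qed.

(* M is stable: a, bc, ab, c in M imply b in M (Schützenberger's criterion). *)
Definition stable M := forall a b c, M a -> M (b ++ c) -> M (a ++ b) -> M c -> M b.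

Lemma free_factorization_unique M w bs1 bs2 : free_submonoid M ->
  factorization M w bs1 -> factorization M w bs2 -> bs1 = bs2.
Proof. by move=> [_ huniq] [h1 <-] [h2 f2]; apply: huniq. Qed.

(* A free submonoid is stable: compare two factorizations of abc. *)
Lemma free_stable M : free_submonoid M -> stable M.
Proof.
move=> hfree a b c Ma Mbc Mab Mc; have hM := hfree.1.
have [[Fa fa] [Fbc fbc]] := (factorization_exists hM Ma, factorization_exists hM Mbc).
have [[Fab fab] [Fc fc]] := (factorization_exists hM Mab, factorization_exists hM Mc).
have E : Fa ++ Fbc = Fab ++ Fc.
  apply: free_factorization_unique hfree (factorization_cat fa fbc) _.
  by rewrite catA; apply: factorization_cat.
have [[r er]|[r er]] := cat_prefix_cases E.
- have -> : b = flatten r.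
    by apply: (@cat_cancel_l _ a); rewrite -fab.2 er flatten_cat fa.2.
  apply: submonoid_flatten => // t ht; suff [_ []] : base M t by [].
  by apply: fab.1; rewrite er mem_cat ht orbT.
- have : size a = size (a ++ b ++ flatten r).
    by rewrite -{1}fa.2 er flatten_cat fab.2 catA.
  rewrite !size_cat => /eqP; rewrite -{1}[size a]addn0 eqn_add2l eq_sym addn_eq0.
  by case/andP=> /eqP/size0nil -> _; case: hM.
Qed.

Lemma factorization_mem M w bs : submonoid M -> factorization M w bs -> M w.
Proof. by move=> hM [hbs <-]; apply: submonoid_flatten => // t /hbs [_ []]. Qed.

Lemma factorization_cons M w b bs : factorization M w (b :: bs) ->
  base M b /\ factorization M (flatten bs) bs.
Proof.
move=> [hbs _]; split; first by apply: hbs; rewrite mem_head.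
by split=> // t ht; apply: hbs; rewrite inE ht orbT.
Qed.

(* In a stable submonoid, if bu = cv with u, v in M and c a nonempty element
   of M, then the irreducible b cannot properly extend c: b = cs would put s in M. *)
Lemma stable_base_prefix M b c s u v : stable M -> base M b -> M c -> c != [::] ->
  M u -> M v -> b = c ++ s -> b ++ u = c ++ v -> s = [::].
Proof.
move=> st [_ [Mb irr]] Mc cn Mu Mv eb E.
have [//|sn] := eqVneq s [::].
have Msu : M (s ++ u) by rewrite (@cat_cancel_l _ c (s ++ u) v) // catA -eb.
have Ms : M s by apply: (st c s u) => //; rewrite -eb.
by case: irr; exists c, s.
Qed.

Lemma stable_factorization_unique M w bs1 bs2 : submonoid M -> stable M ->
  factorization M w bs1 -> factorization M w bs2 -> bs1 = bs2.
Proof.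
move=> hM st; elim: bs1 w bs2 => [|b1 F1 IH] w [|b2 F2] f1 f2 //.
- have [[b2n _] _] := factorization_cons f2; move: f2 f1 b2n => [_ <-] [_].
  by case: b2.
- have [[b1n _] _] := factorization_cons f1; move: f1 f2 b1n => [_ <-] [_].
  by case: b1.
have [[hb1 fF1] [hb2 fF2]] := (factorization_cons f1, factorization_cons f2).
have E : b1 ++ flatten F1 = b2 ++ flatten F2 by case: f1 f2 => _ /= -> [_ /= ->].
have [MF1 MF2] := (factorization_mem hM fF1, factorization_mem hM fF2).
have e12 : b1 = b2.
  have [[r er]|[r er]] := cat_prefix_cases E.
  - by rewrite er (stable_base_prefix st hb2 hb1.2.1 hb1.1 MF2 MF1 er (esym E)) cats0.
  - by rewrite er (stable_base_prefix st hb1 hb2.2.1 hb2.1 MF1 MF2 er E) cats0.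
move: E fF2; rewrite -e12 => /cat_cancel_l <- fF2.
by rewrite (IH _ _ fF1 fF2).
Qed.

Lemma factorization_take M w bs k :
  factorization M w bs -> factorization M (flatten (take k bs)) (take k bs).
Proof. by move=> [hbs _]; split=> // t /mem_take /hbs. Qed.
End Factorization.

Section FreeHull.
Variables (S : countType) (Z : seq S -> Prop).
Notation H := (free_hull Z).

Lemma free_hull_submonoid : submonoid H.
Proof.
split; first by move=> M [[M0 _] _] _.
by move=> p q hp hq M hf hZ; apply: hf.1.2; [apply: hp | apply: hq].
Qed.

Lemma free_hull_of t : Z t -> H t.
Proof. by move=> ht M _; apply. Qed.

(* The free hull is an intersection of stable submonoids, hence stable. *)
Lemma free_hull_stable : stable H.
Proof.
move=> a b c ha hbc hab hc M hf hZ.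
by apply: (free_stable hf (a := a) (c := c));
  [apply: ha | apply: hbc | apply: hab | apply: hc].
Qed.

Lemma hull_factorization_exists w : H w -> exists bs, factorization H w bs.
Proof. exact: factorization_exists free_hull_submonoid. Qed.

Lemma hull_factorization_unique w bs1 bs2 :
  factorization H w bs1 -> factorization H w bs2 -> bs1 = bs2.
Proof. exact: stable_factorization_unique free_hull_submonoid free_hull_stable. Qed.

Lemma letter_FB c : H [:: c] -> FB Z [:: c].
Proof.
move=> hc; split=> //; split=> // -[p [q [pn [qn [_ [_ /(congr1 size)]]]]]].
by case: p pn => // a p _; case: q qn => // b q _; rewrite size_cat /= addnS.
Qed.

Lemma firstZ_letter d s : (forall c, H [:: c]) -> firstZ Z (d :: s) [:: d].
Proof.
move=> hlet; exists [seq [:: e] | e <- d :: s]; split.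
  by move=> t /mapP [e _ ->]; apply: letter_FB.
split; last by eexists.
by rewrite /=; congr (_ :: _); elim: s => //= e s ->.
Qed.

Lemma firstZ_cat p q d :
  H p -> H q -> p != [::] -> firstZ Z (p ++ q) d -> firstZ Z p d.
Proof.
move=> /hull_factorization_exists[Fp fp] /hull_factorization_exists[Fq fq] pn.
move=> [bs [hbs [fbs [rest ebs]]]].
have : Fp ++ Fq = bs by apply: hull_factorization_unique (factorization_cat fp fq) _.
case: Fp fp => [[_ ep]|e Fp fp]; first by rewrite -ep in pn.
rewrite ebs => -[<- _]; exists (e :: Fp); split; first exact: fp.1.
by split; [exact: fp.2 | exists Fp].
Qed.

Lemma Zprefix_beyond o Y r Fo F :
  factorization H o Fo -> factorization H Y F -> Zprefix Z (o ++ Y) r ->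
  size o < size r -> exists k, r = o ++ flatten (take k F).
Proof.
move=> fo fY [bs [hbs [fbs [j [_ er]]]]].
have ebs : bs = Fo ++ F.
  by apply: hull_factorization_unique (factorization_cat fo fY); split.
rewrite er ebs take_cat; case: (ltnP j (size Fo)) => hj.
  by move=> /leq_trans/(_ (size_flatten_take Fo j)); rewrite fo.2 ltnn.
by exists (j - size Fo); rewrite flatten_cat fo.2.
Qed.

Lemma Zwedge_diverging o Y1 Y2 Fo F1 F2 : Fo != [::] ->
  factorization H o Fo -> factorization H Y1 F1 -> factorization H Y2 F2 ->
  (forall e T1 T2, F1 = e :: T1 -> F2 = e :: T2 -> False) ->
  Zwedge Z (o ++ Y1) (o ++ Y2) o.
Proof.
move=> Fon fo f1 f2 diverge.
have prefix_o Y F : factorization H Y F -> Zprefix Z (o ++ Y) o.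
  move=> /(factorization_cat fo) [hbs fbs].
  exists (Fo ++ F); split=> //; split=> //.
  exists (size Fo); rewrite lt0n size_eq0 Fon size_cat leq_addr.
  by rewrite take_size_cat // fo.2.
left; split; [exact: prefix_o f1 | split; [exact: prefix_o f2 |]].
move=> r p1 p2; rewrite leqNgt; apply/negP => lt.
have [[k1 e1] [k2 e2]] := (Zprefix_beyond fo f1 p1 lt, Zprefix_beyond fo f2 p2 lt).
have ew : flatten (take k1 F1) = flatten (take k2 F2).
  by apply: (@cat_cancel_l _ o); rewrite -e1 -e2.
have et : take k1 F1 = take k2 F2.
  apply: hull_factorization_unique (factorization_take k1 f1) _.
  by rewrite ew; exact: (factorization_take k2 f2).
case ek : (take k1 F1) et => [|e T] et.
  by move: lt; rewrite e1 ek cats0 ltnn.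
have [[T1 eF1] [T2 eF2]] := (take_cons ek, take_cons (esym et)).
exact: diverge eF1 eF2.
Qed.

Lemma Zwedge_of_overflow o Y1 Y2 r1 r2 : o != [::] ->
  H o -> H (o ++ Y1) -> H (o ++ Y2) -> H r1 -> H r2 ->
  H (Y1 ++ r1) -> H (Y2 ++ r2) ->
  (forall d, firstZ Z (Y1 ++ r1) d -> firstZ Z (Y2 ++ r2) d -> False) ->
  Zwedge Z (o ++ Y1) (o ++ Y2) o.
Proof.
move=> on Ho HB1 HB2 Hr1 Hr2 Hm1 Hm2 diverge.
have HY1 : H Y1 := free_hull_stable Ho Hm1 HB1 Hr1.
have HY2 : H Y2 := free_hull_stable Ho Hm2 HB2 Hr2.
have [Fo fo] := hull_factorization_exists Ho.
have [[F1 f1] [F2 f2]] := (hull_factorization_exists HY1, hull_factorization_exists HY2).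
have [Fr1 fr1] := hull_factorization_exists Hr1.
have [Fr2 fr2] := hull_factorization_exists Hr2.
apply: (Zwedge_diverging _ fo f1 f2) => [|e T1 T2 eF1 eF2].
  by apply: contraNneq on => Fo0; rewrite -fo.2 Fo0.
have first_e Y F r Fr T : factorization H Y F -> factorization H r Fr ->
    F = e :: T -> firstZ Z (Y ++ r) e.
  move=> fY fr eF; have [hbs fbs] := factorization_cat fY fr.
  by exists (F ++ Fr); split=> //; split=> //; rewrite eF; eexists.
exact: diverge (first_e _ _ _ _ _ f1 fr1 eF1) (first_e _ _ _ _ _ f2 fr2 eF2).
Qed.
Lemma Zmarked_first_letters n (f : 'I_n -> seq S) i j d d' s s' :
  Zmarked Z f -> (forall c, H [:: c]) -> i != j ->
  f i = d :: s -> f j = d' :: s' -> d != d'.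
Proof.
move=> [_ hm] hlet ij ei ej; apply/eqP => edd'; apply: (hm i j ij [:: d] [:: d']).
- by rewrite ei; apply: firstZ_letter.
- by rewrite ej; apply: firstZ_letter.
- by rewrite edd'.
Qed.
End FreeHull.

Section Generated.
Variable S : countType.
Implicit Types (X Y U : seq (seq S)) (w t : seq S).

Lemma gen_submonoid X : submonoid (gen X).
Proof.
split; first by exists [::].
move=> p q [ws1 [h1 <-]] [ws2 [h2 <-]]; exists (ws1 ++ ws2).
split; last exact: flatten_cat.
by move=> t; rewrite mem_cat => /orP[/h1|/h2].
Qed.

Lemma gen_mem X t : t \in X -> gen X t.
Proof.
by move=> ht; exists [:: t]; split; [move=> s; rewrite inE => /eqP -> | rewrite /= cats0].
Qed.

Lemma gen_trans X Y w : {in X, forall t, gen Y t} -> gen X w -> gen Y w.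
Proof.
by move=> hXY [ws [h <-]]; apply: submonoid_flatten (gen_submonoid Y) _ => t /h /hXY.
Qed.

Lemma gen_short X Y w :
  {in X, forall t, size t <= size w -> t \in Y} -> gen X w -> gen Y w.
Proof.
move=> hXY [ws [h fw]]; exists ws; split=> // t ht.
by apply: hXY (h t ht) _; rewrite -fw size_in_flatten.
Qed.

Lemma gen_letter X c : {in X, forall t, t != [::]} -> gen X [:: c] -> [:: c] \in X.
Proof.
move=> hne [[|t ws] [h fw]] //.
have tX : t \in X := h t (mem_head _ _).
have := hne t tX; move: fw tX; clear h.
by case: t => [|d [|e t]] //= [-> _].
Qed.

Lemma kmaximal_gen k X Y : kmaximal k (gen X) -> size Y <= k ->
  {in X, forall t, gen Y t} -> {in Y, forall t, gen X t}.
Proof.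
move=> [_ [_ hmax]] hY hXY t ht.
apply: (hmax (gen Y)) (gen_submonoid Y) _ _ _ (gen_mem ht); first by exists Y.
by move=> w; apply: gen_trans.
Qed.

(* If P = Q s with
   P, Q in U and s nonempty, then replacing P by s shows s in U^*, hence s in
   (U - P)^* and P in (U - P)^*; replacing P by any letter c then shows that
   [c] is in U, and [c] differs from P since |P| >= 2. *)
Lemma kmaximal_proper_prefix k U P Q s :
  kmaximal k (gen U) -> size U <= k -> uniq U -> {in U, forall t, t != [::]} ->
  P \in U -> Q \in U -> P = Q ++ s -> s != [::] ->
  forall c, [:: c] \in U /\ [:: c] != P.
Proof.
move=> hmax hk hU hne hP hQ eP sn c.
have ltsP : size s < size P.
  by rewrite eP size_cat -{1}[size s]add0n ltn_add2r lt0n size_eq0 hne.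
have in_rem t : t \in U -> t != P -> t \in rem P U.
  by move=> tU tP; rewrite (mem_rem_uniq P hU) inE tP tU.
have Q_rem : Q \in rem P U.
  apply: in_rem hQ _; apply: contraNneq sn => eQ.
  by move: eP; rewrite -eQ -{1}[Q]cats0 => /cat_cancel_l <-.
have sizeY t : size (t :: rem P U) <= k.
  by rewrite /= size_rem // prednK // lt0n size_eq0; apply: contraTneq hP => ->.
have cover t : gen (t :: rem P U) P -> {in U, forall t', gen (t :: rem P U) t'}.
  move=> hYP t' ht'; have [-> //|t'P] := eqVneq t' P.
  by apply: gen_mem; rewrite inE in_rem ?orbT.
have s_U : gen U s.
  apply: (kmaximal_gen hmax (sizeY s)) (mem_head _ _); apply: cover.
  rewrite [X in gen _ X]eP; apply: (gen_submonoid _).2; apply: gen_mem.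
  - by rewrite inE Q_rem orbT.
  - exact: mem_head.
have P_rem : gen (rem P U) P.
  rewrite [X in gen _ X]eP; apply: (gen_submonoid _).2 (gen_mem Q_rem) _.
  apply: gen_short s_U => t tU hts; apply: in_rem tU _.
  by apply: contraTneq hts => ->; rewrite -ltnNge.
have c_U : gen U [:: c].
  apply: (kmaximal_gen hmax (sizeY [:: c])) (mem_head _ _); apply: cover.
  by apply: gen_trans P_rem => t ht; apply: gen_mem; rewrite inE ht orbT.
split; first exact: gen_letter hne c_U.
by apply: contraTneq ltsP => <-; rewrite ltnS leqn0 size_eq0.
Qed.
End Generated.

Lemma mk3_mem (S : countType) (a b c : seq S) i : mk3 a b c i \in [:: a; b; c].
Proof. by case: i => [[|[|[|m]]] hi] //=; rewrite !inE eqxx ?orbT. Qed.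

Lemma mk3_inj (S : countType) (a b c : seq S) :
  uniq [:: a; b; c] -> injective (mk3 a b c).
Proof.
move=> hu i j e; apply: val_inj; move: hu e.
case: i => [[|[|[|m]]] hi] //; case: j => [[|[|[|n]]] hj] //= hu e;
  move: hu; rewrite /mk3 /= in e; rewrite /= e !inE eqxx /= ?orbT ?andbF //.
Qed.

Lemma morph_cat (S : countType) n (f : 'I_n -> seq S) s t :
  morph f (s ++ t) = morph f s ++ morph f t.
Proof. by rewrite /morph map_cat flatten_cat. Qed.

Lemma morph_hull (S : countType) (Z : seq S -> Prop) n (f : 'I_n -> seq S) s :
  (forall i, Z (f i)) -> free_hull Z (morph f s).
Proof.
move=> hf; apply: submonoid_flatten (free_hull_submonoid Z) _.
by move=> t /mapP [i _ ->]; apply: free_hull_of.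
Qed.

(* The three images x, y, z of a Z-marked morphism have three distinct first
   letters.  If U^* is 3-maximal with U a 3-set inside Z and P = Q s properly,
   all letters would be among the two elements of U other than P: too few. *)
Lemma marked_prefix_free (S : countType) (Z : seq S -> Prop) x y z U P Q s :
  Zmarked Z (mk3 x y z) -> x != [::] -> y != [::] -> z != [::] ->
  kmaximal 3 (gen U) -> size U <= 3 -> uniq U -> {in U, forall t, t != [::]} ->
  {in U, forall t, Z t} -> P \in U -> Q \in U -> P = Q ++ s -> s != [::] -> False.
Proof.
move=> hmark hx hy hz hmax hk hU hne hUZ hP hQ eP sn.
have letters := kmaximal_proper_prefix hmax hk hU hne hP hQ eP sn.
have hlet c : free_hull Z [:: c] by apply: free_hull_of; apply: hUZ (letters c).1.
case: x hx hmark => [|dx x] // _ hmark; case: y hy hmark => [|dy y] // _ hmark.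
case: z hz hmark => [|dz z] // _ hmark.
have d01 := Zmarked_first_letters (i := @Ordinal 3 0 isT) (j := @Ordinal 3 1 isT)
  hmark hlet isT erefl erefl.
have d02 := Zmarked_first_letters (i := @Ordinal 3 0 isT) (j := @Ordinal 3 2 isT)
  hmark hlet isT erefl erefl.
have d12 := Zmarked_first_letters (i := @Ordinal 3 1 isT) (j := @Ordinal 3 2 isT)
  hmark hlet isT erefl erefl.
have huniq : uniq [:: P; [:: dx]; [:: dy]; [:: dz]].
  by rewrite /= !inE !negb_or !(eq_sym P) !(letters _).2 d01 d02 d12.
have hsub : {subset [:: P; [:: dx]; [:: dy]; [:: dz]] <= U}.
  by move=> t; rewrite !inE => /or4P[] /eqP -> //; apply: (letters _).1.
by have := leq_trans (uniq_leq_size huniq hsub) hk.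
Qed.

Lemma mk3_prefix_incomparable (S : countType) (Z : seq S -> Prop) x y z u v w
    p q s :
  Zmarked Z (mk3 x y z) -> x != [::] -> y != [::] -> z != [::] ->
  u != [::] -> v != [::] -> w != [::] -> uniq [:: u; v; w] ->
  kmaximal 3 (gen [:: u; v; w]) -> {in [:: u; v; w], forall t, Z t} ->
  p <> q -> mk3 u v w p <> mk3 u v w q ++ s.
Proof.
move=> hmark hx hy hz hu hv hw hU hmax hUZ pq ep.
have [s0|sn] := eqVneq s [::].
  by apply: pq; apply: (mk3_inj hU); rewrite ep s0 cats0.
apply: (marked_prefix_free hmark hx hy hz hmax _ hU _ hUZ (mk3_mem u v w p)
  (mk3_mem u v w q) ep sn) => //.
by move=> t; rewrite !inE => /or3P[] /eqP ->.
Qed.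

(* Lemma 4.6 for arbitrary morphisms g, h with images in Z, once o is known to
   be a common prefix of h(b1) and h(b2): o lies in the free hull (stability,
   from g(u) = h(v) o), and the continuations g(a_i q_i) of o have
   first_Z(g a_i), which are assumed to differ. *)
Lemma overflow_Zwedge (S : countType) (Z : seq S -> Prop) n (g h : 'I_n -> seq S)
    o uu vv a1 a2 q1 q2 b1 b2 r1 r2 Y1 Y2 :
  (forall i, Z (g i)) -> (forall i, Z (h i)) -> (forall i, g i != [::]) ->
  o != [::] -> morph g uu = morph h vv ++ o ->
  h b1 ++ morph h r1 = o ++ morph g (a1 :: q1) ->
  h b2 ++ morph h r2 = o ++ morph g (a2 :: q2) ->
  h b1 = o ++ Y1 -> h b2 = o ++ Y2 ->
  (forall d, firstZ Z (g a1) d -> firstZ Z (g a2) d -> False) ->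
  Zwedge Z (h b1) (h b2) o.
Proof.
move=> gZ hZ gne on hov e1 e2 eY1 eY2 diverge.
have hull_h s : free_hull Z (morph h s) := morph_hull s hZ.
have hull_g s : free_hull Z (morph g s) := morph_hull s gZ.
have Ho : free_hull Z o.
  apply: (@free_hull_stable S Z (morph h vv) o (morph g (a1 :: q1))).
  - exact: hull_h.
  - by rewrite -e1; apply: (hull_h (b1 :: r1)).
  - by rewrite -hov.
  - exact: hull_g.
have m1 : Y1 ++ morph h r1 = morph g (a1 :: q1).
  by apply: (@cat_cancel_l _ o); rewrite catA -eY1 e1.
have m2 : Y2 ++ morph h r2 = morph g (a2 :: q2).
  by apply: (@cat_cancel_l _ o); rewrite catA -eY2 e2.
have first_g i q' d : firstZ Z (morph g (i :: q')) d -> firstZ Z (g i) d.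
  by apply: firstZ_cat; [exact: free_hull_of | exact: hull_g | exact: gne].
rewrite eY1 eY2; apply: (Zwedge_of_overflow (r1 := morph h r1) (r2 := morph h r2));
  rewrite -?eY1 -?eY2 ?m1 ?m2 //; try exact: hull_g; try exact: hull_h.
- exact: free_hull_of.
- exact: free_hull_of.
- by move=> d f1 f2; apply: diverge (first_g _ _ _ f1) (first_g _ _ _ f2).
Qed.

Theorem lemma4p6 (S : countType) (x y z u v w : seq S)
  (hx : x != [::]) (hy : y != [::]) (hz : z != [::])
  (hu : u != [::]) (hv : v != [::]) (hw : w != [::])
  (hX3 : uniq [:: x; y; z]) (hU3 : uniq [:: u; v; w])
  (hXU : ~ (forall t, (t \in [:: x; y; z]) = (t \in [:: u; v; w])))
  (hXmax : kmaximal 3 (gen [:: x; y; z]))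
  (hUmax : kmaximal 3 (gen [:: u; v; w]))
  (hmark : Zmarked (fun t => t \in [:: x; y; z; u; v; w]) (mk3 x y z))
  (o : seq S) (ho : o != [::]) (uu vv uu1 uu2 vv1 vv2 : seq 'I_3)
  (hov : morph (mk3 x y z) uu = morph (mk3 u v w) vv ++ o)
  (hu1 : uu1 != [::]) (hu2 : uu2 != [::]) (hv1 : vv1 != [::]) (hv2 : vv2 != [::])
  (he1 : morph (mk3 x y z) (uu ++ uu1) = morph (mk3 u v w) (vv ++ vv1))
  (he2 : morph (mk3 x y z) (uu ++ uu2) = morph (mk3 u v w) (vv ++ vv2))
  (hf1 : head ord0 uu1 <> head ord0 uu2)
  (hf2 : head ord0 vv1 <> head ord0 vv2) :
  Zwedge (fun t => t \in [:: x; y; z; u; v; w])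
    (mk3 u v w (head ord0 vv1)) (mk3 u v w (head ord0 vv2)) o.
Proof.
set Z := (fun t => t \in [:: x; y; z; u; v; w]); set g := mk3 x y z; set h := mk3 u v w.
have XZ : {in [:: x; y; z], forall t, Z t}.
  by move=> t; rewrite /Z !inE => /or3P[] ->; rewrite ?orbT.
have UZ : {in [:: u; v; w], forall t, Z t}.
  by move=> t; rewrite /Z !inE => /or3P[] ->; rewrite ?orbT.
case: uu1 uu2 vv1 vv2 hu1 hu2 hv1 hv2 he1 he2 hf1 hf2
  => [|a1 q1] [|a2 q2] [|b1 r1] [|b2 r2] //= _ _ _ _ he1 he2 a12 b12.
have incomparable p q s : p <> q -> h p <> h q ++ s.
  exact: mk3_prefix_incomparable hmark hx hy hz hu hv hw hU3 hUmax UZ.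
have overflow i j q' r : morph g (uu ++ i :: q') = morph h (vv ++ j :: r) ->
    h j ++ morph h r = o ++ morph g (i :: q').
  by rewrite !morph_cat hov -catA => /cat_cancel_l.
have [e1 e2] := (overflow _ _ _ _ he1, overflow _ _ _ _ he2).
have [Y1 [Y2 [eY1 eY2]]] := common_prefix_of_incomparable
  (fun s => incomparable _ _ s b12) (fun s => incomparable _ _ s (nesym b12)) e1 e2.
apply: (overflow_Zwedge _ _ _ ho hov e1 e2 eY1 eY2) => [i|i|i|d f1 f2].
- exact: XZ (mk3_mem x y z i).
- exact: UZ (mk3_mem u v w i).
- by rewrite /g; case: i => [[|[|[|m]]] hi].
- by apply: (proj2 hmark a1 a2 _ _ _ f1 f2); apply/eqP.
Qed.
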